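(* Assume $G$ is strongly connected, $r=1$ (neutral drift), and $C\subseteq V$ with $F_C>0$. Let $P_{\min,t}=\min_{i\in V}P_{i,t|C}$. Then $$\frac{1}{F_C}\sum_{t=1}^{\infty}t\,\big(P_{\min,t}-P_{\min,t-1}\big)\;\le\;\frac{1}{F_C}\sum_{t=1}^{\infty}t\,\big(F_{t|C}-F_{t-1|C}\big)=t_C .$$
   Context: Let $G=(V,E)$ be a finite directed graph with $N=|V|$ vertices and weight matrix $W=[w_{ij}]$, $w_{ij}>0$ iff $(i,j)\in E$, $\sum_j w_{ij}=1$ for all $i$. A configuration is a set of mutants. In the neutral-drift birth–death process started from configuration $C$ at time $0$, at each step a vertex $i$ is selected uniformly at random, then $j$ is chosen with probability $w_{ij}$ and $j$ takes the type of $i$. $P_{i,t|C}$ is the probability that $i$ is a mutant at time $t$. $F_{t|C}$ is the probability that all vertices are mutants at time $t$ (fixation has occurred by time $t$), $F_C=\lim_{t\to\infty}F_{t|C}$ is the fixation probability, and $t_C=\frac{1}{F_C}\sum_{t\ge1}t(F_{t|C}-F_{t-1|C})$ is the mean time to fixation conditioned on fixation. *)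

From Stdlib Require Import Reals Lra Lia Arith List.
Open Scope R_scope.

(* Vertices are 0, ..., N-1.  A weight matrix is W : nat -> nat -> R,
   only entries with indices < N matter. *)

Fixpoint sumN (n : nat) (f : nat -> R) : R :=
  match n with
  | O => 0
  | S m => sumN m f + f m
  end.

Definition edge (W : nat -> nat -> R) (i j : nat) : Prop := 0 < W i j.

Inductive reach (N : nat) (W : nat -> nat -> R) (i : nat) : nat -> Prop :=
  | reach_refl : reach N W i i
  | reach_step : forall j k, reach N W i j -> (k < N)%nat -> edge W j k ->
                 reach N W i k.

Definition strongly_connected (N : nat) (W : nat -> nat -> R) : Prop :=
  forall i j, (i < N)%nat -> (j < N)%nat -> reach N W i j.

Definition weight_matrix (N : nat) (W : nat -> nat -> R) : Prop :=
  (forall i j, (i < N)%nat -> (j < N)%nat -> 0 <= W i j) /\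
  (forall i, (i < N)%nat -> sumN N (fun j => W i j) = 1).

(* A configuration: the set of mutants, as a characteristic function. *)
Definition config := nat -> bool.

Definition update (C : config) (i j : nat) : config :=
  fun k => if Nat.eqb k j then C i else C k.

(* Neutral-drift (r = 1) birth-death process, t-step expectation of an
   observable g started from configuration C (Kolmogorov backward recursion):
   E_0[g](C) = g C,
   E_{t+1}[g](C) = sum_{i,j} (1/N) w_ij E_t[g](C with j taking the type of i). *)
Fixpoint expect (N : nat) (W : nat -> nat -> R) (g : config -> R)
    (t : nat) (C : config) : R :=
  match t with
  | O => g C
  | S t' => sumN N (fun i => sumN N (fun j =>
              / INR N * W i j * expect N W g t' (update C i j)))
  end.

Definition indic (b : bool) : R := if b then 1 else 0.

Definition Pmut (N : nat) (W : nat -> nat -> R) (i t : nat) (C : config) : R :=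
  expect N W (fun D => indic (D i)) t C.

Definition all_mutant (N : nat) (D : config) : bool :=
  forallb (fun k => D k) (seq 0 N).

Definition Ffix (N : nat) (W : nat -> nat -> R) (t : nat) (C : config) : R :=
  expect N W (fun D => indic (all_mutant N D)) t C.

(* P_{min,t} = min_{i in V} P_{i,t|C}  (for N >= 1) *)
Definition Pmin (N : nat) (W : nat -> nat -> R) (t : nat) (C : config) : R :=
  fold_right Rmin (Pmut N W 0 t C)
    (map (fun i => Pmut N W i t C) (seq 1 (N - 1))).

Definition mean_fix_time (N : nat) (W : nat -> nat -> R) (C : config)
    (FC tC : R) : Prop :=
  exists Sm, infinite_sum
      (fun t => INR (S t) * (Ffix N W (S t) C - Ffix N W t C)) Sm
    /\ tC = Sm / FC.

From Stdlib Require Import Reals.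
Open Scope R_scope.
From Stdlib Require Import Lra Lia Arith List.
From Coquelicot Require Import Coquelicot.

(* Write u_t for the probability that the process is not yet
   absorbed (neither all mutants nor all residents) at time t.  Pointwise in the
   configuration D, [D all mutant] <= [D i mutant] <= [D all mutant] + [D unabsorbed],
   so taking expectations F_t <= P_{min,t} <= F_t + u_t; likewise
   0 <= F_{t+1} - F_t <= u_t.  By strong connectivity every unabsorbed
   configuration fixates within N steps with probability at least m^N, m the
   smallest positive transition probability, so u_{t+N} <= (1 - m^N) u_t and u_t
   decays geometrically.  The theorem then follows from a purely real-analytic
   comparison: by Abel summation the partial sums of sum (t+1)(x_{t+1} - x_t) are
   (n+1) x_{n+1} - sum_{t<=n} x_t, so for y <= x <= y + u with u_t = O(r^t) both
   series converge and the one of x = P_min is at most the one of y = F. *)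

Lemma pow_antitone (x : R) (a b : nat) : 0 <= x <= 1 -> (a <= b)%nat -> x ^ b <= x ^ a.
Proof.
  intros Hx Hab. induction Hab as [|b Hab IH]; [lra |].
  simpl. assert (0 <= x ^ b) by (apply pow_le; lra). nra.
Qed.

Lemma weighted_geometric_partial_sum (r : R) (n : nat) : r <> 1 ->
  sum_f_R0 (fun k => INR (S k) * r ^ k) n =
  (1 - INR (S (S n)) * r ^ S n + INR (S n) * r ^ S (S n)) / ((1 - r) * (1 - r)).
Proof.
  intro Hr. assert (1 - r <> 0) by lra.
  induction n as [|n IH].
  - simpl. field. auto.
  - rewrite tech5, IH, !S_INR. simpl. field. auto.
Qed.

(* For 0 <= r < 1 the series sum (k+1) r^k converges: its partial sums increase
   and, by the closed form, stay below 1/(1-r)^2. *)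
Lemma weighted_geometric_summable (r : R) : 0 <= r < 1 ->
  ex_series (fun k => INR (S k) * r ^ k).
Proof.
  intros Hr.
  destruct (growing_cv (sum_f_R0 (fun k => INR (S k) * r ^ k))) as [l Hl].
  - intro n. rewrite tech5.
    assert (0 <= INR (S (S n)) * r ^ S n) by (apply Rmult_le_pos; [apply pos_INR | apply pow_le; lra]).
    lra.
  - exists (1 / ((1 - r) * (1 - r))). intros x [n ->].
    rewrite weighted_geometric_partial_sum by lra.
    unfold Rdiv. apply Rmult_le_compat_r; [left; apply Rinv_0_lt_compat; nra |].
    assert (Hpow : 0 <= r ^ S n) by (apply pow_le; lra).
    assert (Hn : 0 <= INR (S n)) by apply pos_INR.
    change (r ^ S (S n)) with (r * r ^ S n). rewrite (S_INR (S n)).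
    assert (INR (S n) * (r * r ^ S n) <= INR (S n) * r ^ S n)
      by (apply Rmult_le_compat_l; nra).
    nra.
  - exists l. apply is_series_Reals. exact Hl.
Qed.

Lemma weighted_increments_summable (z : nat -> R) (c r : R) : 0 <= r < 1 ->
  (forall t, Rabs (z (S t) - z t) <= c * r ^ t) ->
  exists l, infinite_sum (fun t => INR (S t) * (z (S t) - z t)) l.
Proof.
  intros Hr Hz.
  assert (Hdom : ex_series (fun t => c * (INR (S t) * r ^ t)))
    by exact (ex_series_scal_l c _ (weighted_geometric_summable r Hr)).
  assert (Hnorm : forall t, norm (INR (S t) * (z (S t) - z t)) <= c * (INR (S t) * r ^ t)).
  { intro t. change (norm _) with (Rabs (INR (S t) * (z (S t) - z t))).
    rewrite Rabs_mult, Rabs_right by (apply Rle_ge, pos_INR).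
    specialize (Hz t). assert (0 <= INR (S t)) by apply pos_INR. nra. }
  destruct (ex_series_le (V := R_CompleteNormedModule) _ _ Hnorm Hdom) as [l Hl].
  exists l. apply is_series_Reals. exact Hl.
Qed.

Lemma weighted_increments_partial_sum (z : nat -> R) (n : nat) :
  sum_f_R0 (fun t => INR (S t) * (z (S t) - z t)) n = INR (S n) * z (S n) - sum_f_R0 z n.
Proof.
  induction n as [|n IH]; [simpl; ring |].
  rewrite tech5, IH, tech5, !S_INR. ring.
Qed.

(* If y <= x <= y + u, where y is
   nondecreasing with increments at most u and u decays geometrically, then both
   time-weighted increment series converge and the one of x is the smaller:
   the Abel partial sums differ by sum_{t<=n} (x-y)_t - (n+1)(x-y)_{n+1}, which is
   at least -(n+1) u_{n+1} -> 0. *)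
Lemma weighted_increments_compare (x y u : nat -> R) (K r : R) :
  0 <= r < 1 ->
  (forall t, u t <= K * r ^ t) ->
  (forall t, y t <= x t <= y t + u t) ->
  (forall t, 0 <= y (S t) - y t <= u t) ->
  exists Lx Ly,
    infinite_sum (fun t => INR (S t) * (x (S t) - x t)) Lx /\
    infinite_sum (fun t => INR (S t) * (y (S t) - y t)) Ly /\ Lx <= Ly.
Proof.
  intros Hr Hu Hxy Hy.
  assert (HK : 0 <= K) by (pose proof (Hu 0%nat); pose proof (Hxy 0%nat); simpl in *; lra).
  assert (Hdec : forall t, 0 <= K * r ^ S t <= K * r ^ t).
  { intro t. pose proof (pow_antitone r t (S t) ltac:(lra) ltac:(lia)).
    assert (0 <= r ^ S t) by (apply pow_le; lra). split; [nra | apply Rmult_le_compat_l; lra]. }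
  destruct (weighted_increments_summable x (3 * K) r Hr) as [Lx HLx].
  { intro t. pose proof (Hxy t). pose proof (Hxy (S t)). pose proof (Hy t).
    pose proof (Hu t). pose proof (Hu (S t)). pose proof (Hdec t).
    apply Rabs_le. lra. }
  destruct (weighted_increments_summable y K r Hr) as [Ly HLy].
  { intro t. pose proof (Hy t). pose proof (Hu t). pose proof (Hdec t).
    apply Rabs_le. lra. }
  exists Lx, Ly. split; [exact HLx |]. split; [exact HLy |].
  assert (Hvanish : Un_cv (fun n => K * (INR (S n) * r ^ n)) 0).
  { apply is_lim_seq_Reals.
    replace (Finite 0) with (Rbar_mult K 0) by (simpl; f_equal; ring).
    apply is_lim_seq_scal_l, ex_series_lim_0, weighted_geometric_summable, Hr. }
  rewrite <- (Rplus_0_r Ly).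
  refine (@Rle_cv_lim (fun n => sum_f_R0 (fun t => INR (S t) * (x (S t) - x t)) n) (fun n => sum_f_R0 (fun t => INR (S t) * (y (S t) - y t)) n
                                 + K * (INR (S n) * r ^ n)) Lx (Ly + 0) _ HLx (CV_plus _ _ _ _ HLy Hvanish)).
  intro n. rewrite !weighted_increments_partial_sum.
  assert (Hgap : 0 <= sum_f_R0 (fun t => x t - y t) n)
    by (apply cond_pos_sum; intro t; pose proof (Hxy t); lra).
  rewrite minus_sum in Hgap.
  assert (Hlast : INR (S n) * (x (S n) - y (S n)) <= INR (S n) * (K * r ^ n)).
  { apply Rmult_le_compat_l; [apply pos_INR |].
    pose proof (Hxy (S n)). pose proof (Hu (S n)). pose proof (Hdec n). lra. }
  lra.
Qed.

Lemma bernoulli_ineq (a : R) (n : nat) : 0 <= a <= 1 -> 1 - INR n * a <= (1 - a) ^ n.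
Proof.
  intros Ha. induction n as [|n IH]; [simpl; lra |].
  rewrite S_INR. simpl. assert (0 <= INR n) by apply pos_INR.
  assert ((1 - a) * (1 - INR n * a) <= (1 - a) * (1 - a) ^ n) by (apply Rmult_le_compat_l; lra).
  nra.
Qed.

(* Every q < 1 is dominated by the n-th power of some r < 1 (take r = 1 - (1-q)/(2n)). *)
Lemma root_above (q : R) (n : nat) : 0 <= q < 1 -> (0 < n)%nat ->
  exists r, 0 < r < 1 /\ q <= r ^ n.
Proof.
  intros Hq Hn. assert (Hn1 : 1 <= INR n) by (apply (le_INR 1); lia).
  set (a := (1 - q) / (2 * INR n)).
  assert (Ha : 0 < a <= (1 - q) / 2).
  { unfold a. split; [apply Rdiv_lt_0_compat; lra |].
    unfold Rdiv. apply Rmult_le_compat_l; [lra | apply Rinv_le_contravar; lra]. }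
  exists (1 - a). split; [lra |].
  pose proof (bernoulli_ineq a n ltac:(lra)) as Hb.
  replace (INR n * a) with ((1 - q) / 2) in Hb by (unfold a; field; lra). lra.
Qed.

(* A sequence in [0,1] that contracts by a factor q < 1 every n steps decays
   geometrically: u_t <= K r^t with K = r^{-n}, for r as in root_above. *)
Lemma geometric_decay (u : nat -> R) (n : nat) (q : R) :
  (0 < n)%nat -> 0 <= q < 1 ->
  (forall t, 0 <= u t <= 1) ->
  (forall t, u (t + n)%nat <= q * u t) ->
  exists K r, 0 <= r < 1 /\ forall t, u t <= K * r ^ t.
Proof.
  intros Hn Hq Hu Hstep.
  destruct (root_above q n Hq Hn) as [r [Hr Hqr]].
  assert (Hrn : 0 < r ^ n) by (apply pow_lt; lra).
  exists (/ r ^ n), r. split; [lra |].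
  intro t. induction t as [t IH] using (well_founded_induction lt_wf).
  destruct (Nat.lt_ge_cases t n) as [Hlt | Hge].
  - pose proof (pow_antitone r t n ltac:(lra) ltac:(lia)).
    assert (1 <= / r ^ n * r ^ t).
    { apply (Rmult_le_reg_l (r ^ n)); [exact Hrn |].
      rewrite <- Rmult_assoc, Rinv_r by lra. lra. }
    pose proof (Hu t). lra.
  - pose proof (Hstep (t - n)%nat) as Hc. replace (t - n + n)%nat with t in Hc by lia.
    pose proof (IH (t - n)%nat ltac:(lia)) as Hprev. pose proof (Hu (t - n)%nat).
    replace (/ r ^ n * r ^ t) with (r ^ n * (/ r ^ n * r ^ (t - n)))
      by (replace t with (n + (t - n))%nat at 2 by lia; rewrite pow_add; field; lra).
    assert (q * u (t - n)%nat <= r ^ n * u (t - n)%nat) by (apply Rmult_le_compat_r; lra).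
    assert (r ^ n * u (t - n)%nat <= r ^ n * (/ r ^ n * r ^ (t - n))) by (apply Rmult_le_compat_l; lra).
    lra.
Qed.

Lemma pos_lower_bound (n : nat) (g : nat -> R) :
  exists m, 0 < m <= 1 /\ forall k, (k < n)%nat -> 0 < g k -> m <= g k.
Proof.
  induction n as [|n [m [Hm Hbound]]].
  - exists 1. split; [lra | intros; lia].
  - destruct (Rlt_dec 0 (g n)) as [Hpos | Hnpos].
    + exists (Rmin m (g n)). pose proof (Rmin_l m (g n)). split.
      * split; [apply Rmin_glb_lt |]; lra.
      * intros k Hk Hgk. destruct (Nat.eq_dec k n) as [-> | Hne]; [apply Rmin_r |].
        apply Hbound in Hgk; [lra | lia].
    + exists m. split; [exact Hm |]. intros k Hk Hgk.
      destruct (Nat.eq_dec k n) as [-> | Hne]; [contradiction | apply Hbound; [lia | exact Hgk]].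
Qed.

Lemma pos_lower_bound2 (n : nat) (g : nat -> nat -> R) :
  exists m, 0 < m <= 1 /\
    forall i j, (i < n)%nat -> (j < n)%nat -> 0 < g i j -> m <= g i j.
Proof.
  enough (Hrows : forall rows, exists m, 0 < m <= 1 /\
    forall i j, (i < rows)%nat -> (j < n)%nat -> 0 < g i j -> m <= g i j) by apply Hrows.
  induction rows as [|rows [m [Hm Hbound]]].
  - exists 1. split; [lra | intros; lia].
  - destruct (pos_lower_bound n (g rows)) as [m' [Hm' Hbound']].
    exists (Rmin m m'). pose proof (Rmin_l m m'). pose proof (Rmin_r m m'). split.
    + split; [apply Rmin_glb_lt |]; lra.
    + intros i j Hi Hj Hg. destruct (Nat.eq_dec i rows) as [-> | Hne].
      * apply Hbound' in Hg; [lra | exact Hj].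
      * apply Hbound in Hg; [lra | lia | exact Hj].
Qed.

Lemma fold_min_bounds (l : list nat) (f : nat -> R) (b lo hi : R) :
  lo <= b <= hi -> (forall i, In i l -> lo <= f i <= hi) ->
  lo <= fold_right Rmin b (map f l) <= hi.
Proof.
  induction l as [|a l IH]; simpl; intros Hb Hf; [exact Hb |].
  destruct (IH Hb (fun i Hi => Hf i (or_intror Hi))). destruct (Hf a (or_introl eq_refl)).
  split; [apply Rmin_glb; lra | eapply Rle_trans; [apply Rmin_l | lra]].
Qed.

Lemma sumN_ext (n : nat) (f g : nat -> R) :
  (forall k, (k < n)%nat -> f k = g k) -> sumN n f = sumN n g.
Proof. induction n; simpl; intros H; [reflexivity |]. rewrite IHn, H; auto. Qed.

Lemma sumN_le (n : nat) (f g : nat -> R) :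
  (forall k, (k < n)%nat -> f k <= g k) -> sumN n f <= sumN n g.
Proof.
  induction n; simpl; intros H; [lra |].
  pose proof (H n ltac:(lia)). pose proof (IHn ltac:(intros; apply H; lia)). lra.
Qed.

Lemma sumN_plus (n : nat) (f g : nat -> R) :
  sumN n (fun k => f k + g k) = sumN n f + sumN n g.
Proof. induction n; simpl; [lra |]. rewrite IHn. ring. Qed.

Lemma sumN_scal (n : nat) (a : R) (f : nat -> R) :
  sumN n (fun k => a * f k) = a * sumN n f.
Proof. induction n; simpl; [ring |]. rewrite IHn. ring. Qed.

Lemma sumN_const (n : nat) (c : R) : sumN n (fun _ => c) = INR n * c.
Proof. induction n; simpl sumN; [simpl; ring |]. rewrite IHn, S_INR. ring. Qed.

Lemma sumN_ge_term (n : nat) (f : nat -> R) (k : nat) :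
  (forall l, (l < n)%nat -> 0 <= f l) -> (k < n)%nat -> f k <= sumN n f.
Proof.
  intros Hf Hk.
  assert (Hsum : forall m, (m <= n)%nat -> 0 <= sumN m f).
  { induction m; simpl; intros Hm; [lra |]. pose proof (Hf m ltac:(lia)). pose proof (IHm ltac:(lia)). lra. }
  induction n as [|n IH]; [lia |]. simpl.
  destruct (Nat.eq_dec k n) as [-> | Hne].
  - pose proof (Hsum n ltac:(lia)). lra.
  - pose proof (IH ltac:(intros; apply Hf; lia) ltac:(lia) ltac:(intros; apply Hsum; lia)).
    pose proof (Hf n ltac:(lia)). lra.
Qed.

Section Expectation.
Variables (N : nat) (W : nat -> nat -> R).
Hypothesis HN : (0 < N)%nat.
Hypothesis HW : weight_matrix N W.

Lemma transition_nonneg (i j : nat) : (i < N)%nat -> (j < N)%nat -> 0 <= / INR N * W i j.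
Proof.
  intros Hi Hj. apply Rmult_le_pos.
  - left. apply Rinv_0_lt_compat, lt_0_INR, HN.
  - destruct HW as [Hnonneg _]. apply Hnonneg; assumption.
Qed.

Lemma expect_ext (f g : config -> R) : (forall D, f D = g D) ->
  forall t C, expect N W f t C = expect N W g t C.
Proof.
  intros H t; induction t as [|t IH]; intro C; simpl; [apply H |].
  apply sumN_ext; intros; apply sumN_ext; intros. rewrite IH. reflexivity.
Qed.

Lemma expect_lin (a b : R) (f g : config -> R) (t : nat) (C : config) :
  expect N W (fun D => a * f D + b * g D) t C = a * expect N W f t C + b * expect N W g t C.
Proof.
  revert C; induction t as [|t IH]; intro C; simpl; [reflexivity |].
  rewrite <- !sumN_scal, <- sumN_plus. apply sumN_ext; intros.
  rewrite <- !sumN_scal, <- sumN_plus. apply sumN_ext; intros. rewrite IH. ring.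
Qed.

Lemma expect_scal (a : R) (f : config -> R) (t : nat) (C : config) :
  expect N W (fun D => a * f D) t C = a * expect N W f t C.
Proof.
  rewrite (expect_ext _ (fun D => a * f D + 0 * f D)) by (intro; ring).
  rewrite expect_lin. ring.
Qed.

Lemma expect_mono (f g : config -> R) : (forall D, f D <= g D) ->
  forall t C, expect N W f t C <= expect N W g t C.
Proof.
  intros H t; induction t as [|t IH]; intro C; simpl; [apply H |].
  apply sumN_le; intros; apply sumN_le; intros.
  apply Rmult_le_compat_l; [apply transition_nonneg |]; auto.
Qed.

(* Rows of W sum to one, so constants are preserved. *)
Lemma expect_const (c : R) (t : nat) (C : config) : expect N W (fun _ => c) t C = c.
Proof.
  revert C; induction t as [|t IH]; intro C; simpl; [reflexivity |].
  rewrite (sumN_ext N _ (fun _ => / INR N * c)).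
  - rewrite sumN_const. field. apply not_0_INR. lia.
  - intros i Hi. rewrite (sumN_ext N _ (fun j => (/ INR N * c) * W i j)).
    + rewrite sumN_scal. destruct HW as [_ Hrow]. rewrite Hrow by exact Hi. ring.
    + intros j _. rewrite IH. ring.
Qed.

Lemma expect_sandwich (f g h : config -> R) :
  (forall D, g D <= f D <= g D + h D) ->
  forall t C, expect N W g t C <= expect N W f t C <= expect N W g t C + expect N W h t C.
Proof.
  intros H t C. split; [apply expect_mono; intro D; apply H |].
  rewrite <- (Rmult_1_l (expect N W g t C)), <- (Rmult_1_l (expect N W h t C)), <- expect_lin.
  apply expect_mono. intro D. pose proof (H D). lra.
Qed.

Lemma expect_unit_interval (f : config -> R) : (forall D, 0 <= f D <= 1) ->
  forall t C, 0 <= expect N W f t C <= 1.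
Proof.
  intros H t C. rewrite <- (expect_const 0 t C), <- (expect_const 1 t C).
  split; apply expect_mono; intro D; apply H.
Qed.

Lemma expect_closed (Q : config -> Prop) (f : config -> R) (c : R) :
  (forall D i j, (i < N)%nat -> (j < N)%nat -> Q D -> Q (update D i j)) ->
  (forall D, Q D -> f D = c) ->
  forall t D, Q D -> expect N W f t D = c.
Proof.
  intros HQ Hf t; induction t as [|t IH]; intros D HD; simpl; [auto |].
  rewrite <- (expect_const c (S t) D). simpl.
  apply sumN_ext; intros; apply sumN_ext; intros. rewrite IH, expect_const; auto.
Qed.

Lemma expect_shift (f : config -> R) (t s : nat) (C : config) :
  expect N W f (t + s) C = expect N W (fun D => expect N W f s D) t C.
Proof.
  revert C; induction t as [|t IH]; intro C; simpl; [reflexivity |].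
  apply sumN_ext; intros; apply sumN_ext; intros. rewrite IH. reflexivity.
Qed.

End Expectation.

Definition all_resident (N : nat) (D : config) : bool :=
  forallb (fun k => negb (D k)) (seq 0 N).

Definition unabsorbed (N : nat) (D : config) : R :=
  if (all_mutant N D || all_resident N D)%bool then 0 else 1.

Lemma forallb_false_exists {A : Type} (f : A -> bool) (l : list A) :
  forallb f l = false -> exists x, In x l /\ f x = false.
Proof.
  induction l as [|a l IH]; simpl; [discriminate |].
  destruct (f a) eqn:Ha; simpl; intro H.
  - destruct (IH H) as [x [Hx Hfx]]. eauto.
  - eauto.
Qed.

Lemma all_mutant_spec (N : nat) (D : config) :
  all_mutant N D = true <-> forall k, (k < N)%nat -> D k = true.
Proof.
  unfold all_mutant. rewrite forallb_forall.
  split; intros H k Hk; [apply H, in_seq; lia | apply in_seq in Hk; apply H; lia].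
Qed.

Lemma all_resident_spec (N : nat) (D : config) :
  all_resident N D = true <-> forall k, (k < N)%nat -> D k = false.
Proof.
  unfold all_resident. rewrite forallb_forall. split; intros H k Hk.
  - apply Bool.negb_true_iff, H, in_seq. lia.
  - apply in_seq in Hk. apply Bool.negb_true_iff, H. lia.
Qed.

Lemma exists_resident (N : nat) (D : config) :
  all_mutant N D = false -> exists a, (a < N)%nat /\ D a = false.
Proof.
  intro H. destruct (forallb_false_exists _ _ H) as [a [Ha Da]].
  apply in_seq in Ha. exists a. split; [lia | exact Da].
Qed.

Lemma exists_mutant (N : nat) (D : config) :
  all_resident N D = false -> exists a, (a < N)%nat /\ D a = true.
Proof.
  intro H. destruct (forallb_false_exists _ _ H) as [a [Ha Da]].
  apply in_seq in Ha. exists a. split; [lia | apply Bool.negb_false_iff, Da].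
Qed.

Lemma all_mutant_update (N : nat) (D : config) (i j : nat) : (i < N)%nat ->
  all_mutant N D = true -> all_mutant N (update D i j) = true.
Proof.
  intros Hi H. rewrite all_mutant_spec in *. intros k Hk. unfold update.
  destruct (Nat.eqb k j); apply H; assumption.
Qed.

Lemma all_resident_update (N : nat) (D : config) (i j : nat) : (i < N)%nat ->
  all_resident N D = true -> all_resident N (update D i j) = true.
Proof.
  intros Hi H. rewrite all_resident_spec in *. intros k Hk. unfold update.
  destruct (Nat.eqb k j); apply H; assumption.
Qed.

Fixpoint residents (n : nat) (D : config) : nat :=
  match n with
  | O => O
  | S m => (residents m D + (if D m then 0 else 1))%nat
  end.

Lemma residents_le (n : nat) (D : config) : (residents n D <= n)%nat.
Proof. induction n; simpl; [lia | destruct (D n); lia]. Qed.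

Lemma residents_zero (n : nat) (D : config) :
  residents n D = O -> forall k, (k < n)%nat -> D k = true.
Proof.
  induction n; simpl; intros H k Hk; [lia |].
  destruct (D n) eqn:Dn; [| lia].
  destruct (Nat.eq_dec k n) as [-> | Hne]; [exact Dn | apply IHn; lia].
Qed.

Lemma residents_update (n : nat) (D : config) (i j : nat) : D i = true -> D j = false ->
  (residents n (update D i j) + (if Nat.ltb j n then 1 else 0) = residents n D)%nat.
Proof.
  intros Di Dj. induction n as [|n IH]; [reflexivity |].
  simpl. unfold update at 2. revert IH.
  destruct (Nat.eqb_spec n j) as [-> | Hne].
  - rewrite Di, Dj. destruct (Nat.ltb_spec j j), (Nat.ltb_spec j (S j)); lia.
  - destruct (Nat.ltb_spec j n), (Nat.ltb_spec j (S n)); try lia; destruct (D n); lia.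
Qed.

Lemma reach_lt (N : nat) (W : nat -> nat -> R) (a b : nat) :
  reach N W a b -> (a < N)%nat -> (b < N)%nat.
Proof. induction 1; auto. Qed.

Lemma mutant_resident_edge (N : nat) (W : nat -> nat -> R) (D : config) (a b : nat) :
  reach N W a b -> (a < N)%nat -> D a = true -> D b = false ->
  exists i j, (i < N)%nat /\ (j < N)%nat /\ D i = true /\ D j = false /\ edge W i j.
Proof.
  induction 1 as [| j k Hreach IH Hk Hedge]; intros Ha Da Db; [congruence |].
  destruct (D j) eqn:Dj; [| apply IH; auto].
  exists j, k. repeat split; auto. eapply reach_lt; eauto.
Qed.

Section Process.
Variables (N : nat) (W : nat -> nat -> R).
Hypothesis HN : (0 < N)%nat.
Hypothesis HW : weight_matrix N W.
Hypothesis Hsc : strongly_connected N W.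

Lemma Ffix_unit_interval (t : nat) (D : config) : 0 <= Ffix N W t D <= 1.
Proof.
  apply expect_unit_interval; auto. intro D'. unfold indic. destruct (all_mutant N D'); lra.
Qed.

Lemma Ffix_all_mutant (t : nat) (D : config) : all_mutant N D = true -> Ffix N W t D = 1.
Proof.
  apply (expect_closed N W HN HW (fun D => all_mutant N D = true)).
  - intros; apply all_mutant_update; assumption.
  - intros D' ->. reflexivity.
Qed.

Lemma Ffix_all_resident (t : nat) (D : config) : all_resident N D = true -> Ffix N W t D = 0.
Proof.
  apply (expect_closed N W HN HW (fun D => all_resident N D = true)).
  - intros; apply all_resident_update; assumption.
  - intros D' Hres. unfold indic. destruct (all_mutant N D') eqn:Hmut; [| reflexivity].
    rewrite all_mutant_spec in Hmut. rewrite all_resident_spec in Hres.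
    specialize (Hmut 0%nat HN). specialize (Hres 0%nat HN). congruence.
Qed.

(* If every transition along an edge has probability at least m, a configuration
   with at least one mutant and at most k residents fixates within k steps with
   probability at least m^k: by strong connectivity some mutant i has an edge to
   some resident j, and the step "j takes the type of i" removes one resident. *)
Lemma fixation_lower_bound (m : R) :
  0 < m <= 1 ->
  (forall i j, (i < N)%nat -> (j < N)%nat -> edge W i j -> m <= / INR N * W i j) ->
  forall k D, (residents N D <= k)%nat -> (exists a, (a < N)%nat /\ D a = true) ->
  m ^ k <= Ffix N W k D.
Proof.
  intros Hm Hedge k. induction k as [|k IH]; intros D Hres [a [Ha Da]].
  - assert (Hall : all_mutant N D = true)
      by (apply all_mutant_spec, residents_zero; lia).
    unfold Ffix; simpl. rewrite Hall. simpl. lra.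
  - destruct (all_mutant N D) eqn:Hall.
    + rewrite Ffix_all_mutant by exact Hall. apply (pow_antitone m 0); [lra | lia].
    + destruct (exists_resident N D Hall) as [b [Hb Db]].
      destruct (mutant_resident_edge N W D a b (Hsc a b Ha Hb) Ha Da Db)
        as [i [j [Hi [Hj [Di [Dj Hij]]]]]].
      assert (Hnext : m ^ k <= Ffix N W k (update D i j)).
      { apply IH.
        - pose proof (residents_update N D i j Di Dj). destruct (Nat.ltb_spec j N); lia.
        - exists i. split; [exact Hi |]. unfold update. destruct (Nat.eqb i j); exact Di. }
      assert (Hterm : forall i' j', (i' < N)%nat -> (j' < N)%nat ->
                0 <= / INR N * W i' j' * Ffix N W k (update D i' j')).
      { intros. apply Rmult_le_pos; [apply transition_nonneg; auto | apply Ffix_unit_interval]. }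
      change (Ffix N W (S k) D) with
        (sumN N (fun i' => sumN N (fun j' => / INR N * W i' j' * Ffix N W k (update D i' j')))).
      eapply Rle_trans; [| apply sumN_ge_term with (k := i); [| exact Hi]].
      2: { intros l Hl. replace 0 with (sumN N (fun _ => 0)) by (rewrite sumN_const; ring).
           apply sumN_le. intros; apply Hterm; assumption. }
      eapply Rle_trans; [| apply sumN_ge_term with (k := j); [intros; apply Hterm; auto | exact Hj]].
      simpl pow. assert (Hmk : 0 <= m ^ k) by (apply pow_le; lra).
      apply Rmult_le_compat; [lra | exact Hmk | apply Hedge; assumption | exact Hnext].
Qed.

Lemma unabsorbed_contraction :
  exists q, 0 <= q < 1 /\
    forall D, expect N W (unabsorbed N) N D <= q * unabsorbed N D.
Proof.
  destruct (pos_lower_bound2 N (fun i j => / INR N * W i j)) as [m [Hm Hbound]].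
  assert (Hedge : forall i j, (i < N)%nat -> (j < N)%nat -> edge W i j -> m <= / INR N * W i j).
  { intros i j Hi Hj Hij. apply Hbound; auto.
    apply Rmult_lt_0_compat; [apply Rinv_0_lt_compat, lt_0_INR, HN | exact Hij]. }
  assert (HmN : 0 < m ^ N <= 1) by (split; [apply pow_lt; lra | apply (pow_antitone m 0); [lra | lia]]).
  exists (1 - m ^ N). split; [lra |]. intro D.
  unfold unabsorbed at 2. destruct (all_mutant N D) eqn:Hmut; simpl.
  - rewrite (expect_closed N W HN HW (fun D => all_mutant N D = true) _ 0); [lra | | | exact Hmut].
    + intros; apply all_mutant_update; assumption.
    + intros D' HD'. unfold unabsorbed. rewrite HD'. reflexivity.
  - destruct (all_resident N D) eqn:Hres.
    + rewrite (expect_closed N W HN HW (fun D => all_resident N D = true) _ 0); [lra | | | exact Hres].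
      * intros; apply all_resident_update; assumption.
      * intros D' HD'. unfold unabsorbed. rewrite HD', Bool.orb_true_r. reflexivity.
    + (* from an unabsorbed D, staying unabsorbed excludes having fixated *)
      assert (Hfix : m ^ N <= Ffix N W N D)
        by (apply fixation_lower_bound; auto using residents_le, exists_mutant).
      assert (Hle : expect N W (unabsorbed N) N D <=
                    expect N W (fun D' => 1 * 1 + (-1) * indic (all_mutant N D')) N D).
      { apply expect_mono; auto. intro D'. unfold unabsorbed, indic.
        destruct (all_mutant N D'), (all_resident N D'); simpl; lra. }
      rewrite (expect_lin N W 1 (-1) (fun _ => 1) (fun D' => indic (all_mutant N D'))),
        expect_const in Hle by assumption.
      unfold Ffix in Hfix. lra.
Qed.

Lemma unabsorbed_geometric (C : config) :
  exists K r, 0 <= r < 1 /\ forall t, expect N W (unabsorbed N) t C <= K * r ^ t.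
Proof.
  destruct unabsorbed_contraction as [q [Hq Hcontr]].
  apply (geometric_decay _ N q HN Hq).
  - intro t. apply expect_unit_interval; auto. intro D. unfold unabsorbed.
    destruct (all_mutant N D || all_resident N D)%bool; lra.
  - intro t. rewrite expect_shift, <- expect_scal.
    apply expect_mono; auto.
Qed.

(* Pointwise: [all mutant] <= [i mutant] <= [all mutant] + [unabsorbed]. *)
Lemma Pmut_bounds (i t : nat) (C : config) : (i < N)%nat ->
  Ffix N W t C <= Pmut N W i t C <= Ffix N W t C + expect N W (unabsorbed N) t C.
Proof.
  intro Hi. apply expect_sandwich; auto. intro D. unfold unabsorbed, indic.
  destruct (all_mutant N D) eqn:Hmut.
  - rewrite all_mutant_spec in Hmut. rewrite Hmut by exact Hi. simpl. lra.
  - destruct (all_resident N D) eqn:Hres; simpl.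
    + rewrite all_resident_spec in Hres. rewrite Hres by exact Hi. lra.
    + destruct (D i); lra.
Qed.

Lemma Pmin_bounds (t : nat) (C : config) :
  Ffix N W t C <= Pmin N W t C <= Ffix N W t C + expect N W (unabsorbed N) t C.
Proof.
  apply fold_min_bounds; [apply Pmut_bounds, HN |].
  intros i Hi. apply in_seq in Hi. apply Pmut_bounds. lia.
Qed.

(* F_t is nondecreasing, with increments bounded by u_t: one more step can only
   fixate a configuration that is not yet absorbed. *)
Lemma Ffix_increment_bounds (t : nat) (C : config) :
  0 <= Ffix N W (S t) C - Ffix N W t C <= expect N W (unabsorbed N) t C.
Proof.
  assert (Hstep : Ffix N W (S t) C = expect N W (Ffix N W 1) t C).
  { unfold Ffix at 1. rewrite <- Nat.add_1_r. apply expect_shift. }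
  enough (Ffix N W t C <= expect N W (Ffix N W 1) t C
          <= Ffix N W t C + expect N W (unabsorbed N) t C) by lra.
  apply expect_sandwich; auto. intro D. unfold unabsorbed.
  destruct (all_mutant N D) eqn:Hmut.
  - rewrite Ffix_all_mutant by exact Hmut. simpl. lra.
  - destruct (all_resident N D) eqn:Hres; simpl.
    + rewrite Ffix_all_resident by exact Hres. simpl. lra.
    + pose proof (Ffix_unit_interval 1 D). simpl. lra.
Qed.

End Process.

Theorem theorem7 (N : nat) (W : nat -> nat -> R) (C : config) (FC : R)
  (HN : (0 < N)%nat)
  (HW : weight_matrix N W)
  (Hsc : strongly_connected N W)
  (HFC : Un_cv (fun t => Ffix N W t C) FC)
  (HFpos : 0 < FC) :
  exists L tC,
    infinite_sum (fun t => INR (S t) * (Pmin N W (S t) C - Pmin N W t C)) L /\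
    mean_fix_time N W C FC tC /\
    L / FC <= tC.
Proof.
  destruct (unabsorbed_geometric N W HN HW Hsc C) as [K [r [Hr Hdecay]]].
  destruct (weighted_increments_compare
              (fun t => Pmin N W t C) (fun t => Ffix N W t C)
              (fun t => expect N W (unabsorbed N) t C) K r Hr Hdecay
              (fun t => Pmin_bounds N W HN HW t C)
              (fun t => Ffix_increment_bounds N W HN HW t C))
    as [L [Sm [HL [HSm Hle]]]].
  exists L, (Sm / FC). split; [exact HL |]. split.
  - exists Sm. split; [exact HSm | reflexivity].
  - apply Rmult_le_compat_r; [left; apply Rinv_0_lt_compat, HFpos | exact Hle].
Qed.
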